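(* Let $\mathsf C$ be any smooth vector field on $\mathbb R^3$ and $\widetilde\nabla$ the snm-connection determined by $\mathsf C$. Let $M$ be an oriented surface immersed in $\mathbb R^3$ with unit normal $N$, Gaussian curvature $G$ and mean curvature $H$ (with respect to the Euclidean Levi-Civita connection). Then at every point $p\in M$, $$K(p)=\widetilde K(T_pM)+G(p)-\langle \mathsf C(p),N(p)\rangle\, H(p).$$
   Context: Let $\langle\cdot,\cdot\rangle$ be the Euclidean metric on $\mathbb R^3$ and $\widetilde\nabla^0$ its Levi-Civita connection (the ordinary directional derivative). Given a smooth vector field $\mathsf C$ on $\mathbb R^3$, the semi-symmetric non-metric connection (snm-connection) determined by $\mathsf C$ is $\widetilde\nabla_XY=\widetilde\nabla^0_XY+\langle \mathsf C,Y\rangle X$. Its curvature tensor is $\widetilde R(X,Y)Z=\widetilde\nabla_X\widetilde\nabla_YZ-\widetilde\nabla_Y\widetilde\nabla_XZ-\widetilde\nabla_{[X,Y]}Z$. For a $2$-dimensional subspace $\pi\subset T_p\mathbb R^3$ with orthonormal basis $\{e_1,e_2\}$, its sectional curvature with respect to $\widetilde\nabla$ is $\widetilde K(\pi)=\frac12\big(\langle\widetilde R(e_1,e_2)e_2,e_1\rangle+\langle\widetilde R(e_2,e_1)e_1,e_2\rangle\big)$ (independent of the orthonormal basis). For a surface $M$ immersed in $\mathbb R^3$, the induced connection is $\nabla_XY=(\widetilde\nabla_XY)^{\top}$ (tangential component) for tangent vector fields $X,Y$, with curvature tensor $R$ defined by the same formula as $\widetilde R$, and the sectional curvature of $M$ with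 respect to $\widetilde\nabla$ at $p$ is $K(p)=\frac12\big(\langle R(e_1,e_2)e_2,e_1\rangle+\langle R(e_2,e_1)e_1,e_2\rangle\big)$ for an orthonormal basis $\{e_1,e_2\}$ of $T_pM$. The second fundamental form is $h(X,Y)=\langle\widetilde\nabla^0_XY,N\rangle$; $G$ is the determinant and $H$ is one half of the trace of the associated shape operator. *)

From Stdlib Require Import Reals.
From Coquelicot Require Import Coquelicot.
Open Scope R_scope.

Definition Vec3 : Type := (R * R * R)%type.
Definition Pt2 : Type := (R * R)%type.

Definition x1 (v : Vec3) : R := fst (fst v).
Definition x2 (v : Vec3) : R := snd (fst v).
Definition x3 (v : Vec3) : R := snd v.
Definition mk3 (a b c : R) : Vec3 := (a, b, c).

Definition vadd (v w : Vec3) : Vec3 := mk3 (x1 v + x1 w) (x2 v + x2 w) (x3 v + x3 w).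
Definition vopp (v : Vec3) : Vec3 := mk3 (- x1 v) (- x2 v) (- x3 v).
Definition vsub (v w : Vec3) : Vec3 := vadd v (vopp w).
Definition vscal (a : R) (v : Vec3) : Vec3 := mk3 (a * x1 v) (a * x2 v) (a * x3 v).
Definition vdot (v w : Vec3) : R := x1 v * x1 w + x2 v * x2 w + x3 v * x3 w.

Definition du (f : Pt2 -> R) (q : Pt2) : R := Derive (fun t => f (t, snd q)) (fst q).
Definition dv (f : Pt2 -> R) (q : Pt2) : R := Derive (fun t => f (fst q, t)) (snd q).

Fixpoint Ck2 (k : nat) (f : Pt2 -> R) : Prop :=
  match k with
  | O => forall q, continuous f q
  | S k => (forall q, ex_derive (fun t => f (t, snd q)) (fst q)
                   /\ ex_derive (fun t => f (fst q, t)) (snd q))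
           /\ Ck2 k (du f) /\ Ck2 k (dv f)
  end.
Definition smooth2 (f : Pt2 -> R) : Prop := forall k, Ck2 k f.

Definition d1 (f : Vec3 -> R) (x : Vec3) : R := Derive (fun t => f (mk3 t (x2 x) (x3 x))) (x1 x).
Definition d2 (f : Vec3 -> R) (x : Vec3) : R := Derive (fun t => f (mk3 (x1 x) t (x3 x))) (x2 x).
Definition d3 (f : Vec3 -> R) (x : Vec3) : R := Derive (fun t => f (mk3 (x1 x) (x2 x) t)) (x3 x).

Fixpoint Ck3 (k : nat) (f : Vec3 -> R) : Prop :=
  match k with
  | O => forall x, continuous f x
  | S k => (forall x, ex_derive (fun t => f (mk3 t (x2 x) (x3 x))) (x1 x)
                   /\ ex_derive (fun t => f (mk3 (x1 x) t (x3 x))) (x2 x)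
                   /\ ex_derive (fun t => f (mk3 (x1 x) (x2 x) t)) (x3 x))
           /\ Ck3 k (d1 f) /\ Ck3 k (d2 f) /\ Ck3 k (d3 f)
  end.
Definition smooth3 (f : Vec3 -> R) : Prop := forall k, Ck3 k f.

Definition smooth_field3 (X : Vec3 -> Vec3) : Prop :=
  smooth3 (fun x => x1 (X x)) /\ smooth3 (fun x => x2 (X x)) /\ smooth3 (fun x => x3 (X x)).
Definition smooth_map23 (f : Pt2 -> Vec3) : Prop :=
  smooth2 (fun q => x1 (f q)) /\ smooth2 (fun q => x2 (f q)) /\ smooth2 (fun q => x3 (f q)).
Definition smooth_map22 (f : Pt2 -> Pt2) : Prop :=
  smooth2 (fun q => fst (f q)) /\ smooth2 (fun q => snd (f q)).

Definition ddir3 (X : Vec3 -> Vec3) (f : Vec3 -> R) (x : Vec3) : R :=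
  x1 (X x) * d1 f x + x2 (X x) * d2 f x + x3 (X x) * d3 f x.
Definition nabla0 (X Y : Vec3 -> Vec3) (x : Vec3) : Vec3 :=
  mk3 (ddir3 X (fun y => x1 (Y y)) x) (ddir3 X (fun y => x2 (Y y)) x)
      (ddir3 X (fun y => x3 (Y y)) x).
Definition lie3 (X Y : Vec3 -> Vec3) (x : Vec3) : Vec3 :=
  mk3 (ddir3 X (fun y => x1 (Y y)) x - ddir3 Y (fun y => x1 (X y)) x)
      (ddir3 X (fun y => x2 (Y y)) x - ddir3 Y (fun y => x2 (X y)) x)
      (ddir3 X (fun y => x3 (Y y)) x - ddir3 Y (fun y => x3 (X y)) x).
Definition snm (C : Vec3 -> Vec3) (X Y : Vec3 -> Vec3) (x : Vec3) : Vec3 :=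
  vadd (nabla0 X Y x) (vscal (vdot (C x) (Y x)) (X x)).
Definition curvT (C : Vec3 -> Vec3) (X Y Z : Vec3 -> Vec3) (x : Vec3) : Vec3 :=
  vsub (vsub (snm C X (snm C Y Z) x) (snm C Y (snm C X Z) x)) (snm C (lie3 X Y) Z x).
(** sectional curvature of the plane spanned by E1 p, E2 p (orthonormal),
    computed with vector fields E1, E2 extending them *)
Definition secT (C : Vec3 -> Vec3) (E1 E2 : Vec3 -> Vec3) (p : Vec3) : R :=
  / 2 * (vdot (curvT C E1 E2 E2 p) (E1 p) + vdot (curvT C E2 E1 E1 p) (E2 p)).

(** * Surface geometry, for an immersion phi : R^2 -> R^3 (a local patch) *)
Definition pu (phi : Pt2 -> Vec3) (q : Pt2) : Vec3 :=
  mk3 (du (fun r => x1 (phi r)) q) (du (fun r => x2 (phi r)) q) (du (fun r => x3 (phi r)) q).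
Definition pv (phi : Pt2 -> Vec3) (q : Pt2) : Vec3 :=
  mk3 (dv (fun r => x1 (phi r)) q) (dv (fun r => x2 (phi r)) q) (dv (fun r => x3 (phi r)) q).

Definition immersion (phi : Pt2 -> Vec3) : Prop :=
  forall q a b, vadd (vscal a (pu phi q)) (vscal b (pv phi q)) = mk3 0 0 0 -> a = 0 /\ b = 0.

Definition unit_normal (phi : Pt2 -> Vec3) (N : Pt2 -> Vec3) : Prop :=
  forall q, vdot (N q) (pu phi q) = 0 /\ vdot (N q) (pv phi q) = 0 /\ vdot (N q) (N q) = 1.

(** Tangent vector fields on the surface, given by their coefficient functions
    X = a phi_u + b phi_v, with (a,b) = X q. *)
Definition realize (phi : Pt2 -> Vec3) (X : Pt2 -> Pt2) (q : Pt2) : Vec3 :=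
  vadd (vscal (fst (X q)) (pu phi q)) (vscal (snd (X q)) (pv phi q)).
Definition dS (X : Pt2 -> Pt2) (f : Pt2 -> R) (q : Pt2) : R :=
  fst (X q) * du f q + snd (X q) * dv f q.
Definition nabla0S (X : Pt2 -> Pt2) (W : Pt2 -> Vec3) (q : Pt2) : Vec3 :=
  mk3 (dS X (fun r => x1 (W r)) q) (dS X (fun r => x2 (W r)) q) (dS X (fun r => x3 (W r)) q).
Definition lieS (X Y : Pt2 -> Pt2) (q : Pt2) : Pt2 :=
  (dS X (fun r => fst (Y r)) q - dS Y (fun r => fst (X r)) q,
   dS X (fun r => snd (Y r)) q - dS Y (fun r => snd (X r)) q).
Definition tang (N : Pt2 -> Vec3) (w : Vec3) (q : Pt2) : Vec3 :=
  vsub w (vscal (vdot w (N q)) (N q)).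
(** induced connection nabla_X W = (nablaT_X W)^T, for W a (tangent) field along phi *)
Definition nablaS (C : Vec3 -> Vec3) (phi : Pt2 -> Vec3) (N : Pt2 -> Vec3)
    (X : Pt2 -> Pt2) (W : Pt2 -> Vec3) (q : Pt2) : Vec3 :=
  tang N (vadd (nabla0S X W q) (vscal (vdot (C (phi q)) (W q)) (realize phi X q))) q.
Definition curvS (C : Vec3 -> Vec3) (phi : Pt2 -> Vec3) (N : Pt2 -> Vec3)
    (X Y Z : Pt2 -> Pt2) (q : Pt2) : Vec3 :=
  vsub (vsub (nablaS C phi N X (nablaS C phi N Y (realize phi Z)) q)
             (nablaS C phi N Y (nablaS C phi N X (realize phi Z)) q))
       (nablaS C phi N (lieS X Y) (realize phi Z) q).
(** sectional curvature K of M w.r.t. nablaT, computed with tangent fields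
    E1, E2 that are orthonormal at q *)
Definition secS (C : Vec3 -> Vec3) (phi : Pt2 -> Vec3) (N : Pt2 -> Vec3)
    (E1 E2 : Pt2 -> Pt2) (q : Pt2) : R :=
  / 2 * (vdot (curvS C phi N E1 E2 E2 q) (realize phi E1 q)
         + vdot (curvS C phi N E2 E1 E1 q) (realize phi E2 q)).

(** First and second fundamental forms in the coordinate basis (phi_u, phi_v);
    h(X,Y) = <nabla0_X Y, N>, so h_ij = <d_i d_j phi, N>. *)
Definition fE (phi : Pt2 -> Vec3) q := vdot (pu phi q) (pu phi q).
Definition fF (phi : Pt2 -> Vec3) q := vdot (pu phi q) (pv phi q).
Definition fG (phi : Pt2 -> Vec3) q := vdot (pv phi q) (pv phi q).
Definition hL (phi N : Pt2 -> Vec3) q := vdot (nabla0S (fun _ => (1, 0)) (pu phi) q) (N q).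
Definition hM (phi N : Pt2 -> Vec3) q := vdot (nabla0S (fun _ => (1, 0)) (pv phi) q) (N q).
Definition hN (phi N : Pt2 -> Vec3) q := vdot (nabla0S (fun _ => (0, 1)) (pv phi) q) (N q).
(** Matrix of the shape operator A (with <A X, Y> = h(X,Y)) in the basis
    (phi_u, phi_v): A = I^{-1} II. *)
Definition shape11 phi N q :=
  (fG phi q * hL phi N q - fF phi q * hM phi N q) / (fE phi q * fG phi q - fF phi q ^ 2).
Definition shape12 phi N q :=
  (fG phi q * hM phi N q - fF phi q * hN phi N q) / (fE phi q * fG phi q - fF phi q ^ 2).
Definition shape21 phi N q :=
  (fE phi q * hM phi N q - fF phi q * hL phi N q) / (fE phi q * fG phi q - fF phi q ^ 2).
Definition shape22 phi N q :=
  (fE phi q * hN phi N q - fF phi q * hM phi N q) / (fE phi q * fG phi q - fF phi q ^ 2).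
Definition gaussK phi N q := shape11 phi N q * shape22 phi N q - shape12 phi N q * shape21 phi N q.
Definition meanH phi N q := / 2 * (shape11 phi N q + shape22 phi N q).

From Stdlib Require Import Reals Lra Psatz FunctionalExtensionality.
From Coquelicot Require Import Coquelicot.
Open Scope R_scope.

(* The snm-connection differs from the flat connection by the term <C,Y> X.
   Expanding its curvature (using the symmetry of second derivatives) gives
     R~(X,Y)Z = omega(X,Z) Y - omega(Y,Z) X,  omega(v,w) = <nabla0_v C, w> - <C,v><C,w>,
   so K~(T_pM) = -(omega(e1,e1) + omega(e2,e2))/2 for an orthonormal basis (e1,e2).
   On the surface, nabla_X W = (nabla~_X W)^T; expanding <R(X,Y)Z, E> with the
   Leibniz rule, the tangency of X, Y, Z, E and h(X,W) = <nabla0_X W, N> gives the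
   Gauss-type equation
     <R(X,Y)Z, E> = h(Y,Z) h(X,E) - h(X,Z) h(Y,E) + Omega(X,Z) <Y,E> - Omega(Y,Z) <X,E>
   with Omega = omega + <C,N> h. In an orthonormal frame the h-terms give det A = G
   and the Omega-terms give K~(T_pM) - <C,N> (tr A)/2 = K~(T_pM) - <C,N> H. *)

(** * Real analysis in three variables *)

Lemma mk3_eta (v : Vec3) : mk3 (x1 v) (x2 v) (x3 v) = v.
Proof. destruct v as [[a b] c]; reflexivity. Qed.

Lemma Vec3_eq (a b : Vec3) : x1 a = x1 b -> x2 a = x2 b -> x3 a = x3 b -> a = b.
Proof. destruct a as [[a1 a2] a3], b as [[b1 b2] b3]; cbn; intros -> -> ->; reflexivity. Qed.

Lemma continuous_Vec3_eps (f : Vec3 -> R) (p : Vec3) : continuous f p ->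
  forall e, 0 < e -> exists d, 0 < d /\ forall y, Rabs (x1 y - x1 p) < d ->
    Rabs (x2 y - x2 p) < d -> Rabs (x3 y - x3 p) < d -> Rabs (f y - f p) < e.
Proof.
  intros Hc e He.
  destruct (proj1 (filterlim_locally f (f p)) Hc (mkposreal e He)) as [d Hd].
  exists d; split; [apply cond_pos|]. intros y h1 h2 h3.
  apply (Hd y). split; [split|]; assumption.
Qed.

Lemma mvt_between (f : R -> R) (a0 a : R) : (forall s, ex_derive f s) ->
  exists c, Rabs (c - a0) <= Rabs (a - a0) /\ f a - f a0 = Derive f c * (a - a0).
Proof.
  intros Hd.
  destruct (MVT_gen f a0 a (Derive f)) as [c [Hc E]].
  - intros x _. apply Derive_correct, Hd.
  - intros x _. apply continuity_pt_filterlim.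
    apply (ex_derive_continuous (K := R_AbsRing) (V := R_NormedModule)), Hd.
  - exists c; split; [|exact E]. revert Hc; unfold Rmin, Rmax.
    destruct (Rle_dec a0 a); intros [h1 h2]; unfold Rabs; repeat destruct Rcase_abs; lra.
Qed.

Definition partials3 (g : Vec3 -> R) : Prop :=
  forall x, ex_derive (fun t => g (mk3 t (x2 x) (x3 x))) (x1 x)
         /\ ex_derive (fun t => g (mk3 (x1 x) t (x3 x))) (x2 x)
         /\ ex_derive (fun t => g (mk3 (x1 x) (x2 x) t)) (x3 x).

Definition in_box (p x y : Vec3) : Prop :=
  Rabs (x1 y - x1 p) <= Rabs (x1 x - x1 p) /\ Rabs (x2 y - x2 p) <= Rabs (x2 x - x2 p)
  /\ Rabs (x3 y - x3 p) <= Rabs (x3 x - x3 p).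

Lemma increment_partials3 (g : Vec3 -> R) (p x : Vec3) : partials3 g ->
  exists y1 y2 y3, in_box p x y1 /\ in_box p x y2 /\ in_box p x y3 /\
  g x - g p = d1 g y1 * (x1 x - x1 p) + d2 g y2 * (x2 x - x2 p) + d3 g y3 * (x3 x - x3 p).
Proof.
  intros Hg.
  destruct (mvt_between (fun s => g (mk3 s (x2 x) (x3 x))) (x1 p) (x1 x)
    (fun s => proj1 (Hg (mk3 s (x2 x) (x3 x))))) as [c1 [B1 M1]].
  destruct (mvt_between (fun s => g (mk3 (x1 p) s (x3 x))) (x2 p) (x2 x)
    (fun s => proj1 (proj2 (Hg (mk3 (x1 p) s (x3 x)))))) as [c2 [B2 M2]].
  destruct (mvt_between (fun s => g (mk3 (x1 p) (x2 p) s)) (x3 p) (x3 x)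
    (fun s => proj2 (proj2 (Hg (mk3 (x1 p) (x2 p) s))))) as [c3 [B3 M3]].
  exists (mk3 c1 (x2 x) (x3 x)), (mk3 (x1 p) c2 (x3 x)), (mk3 (x1 p) (x2 p) c3).
  unfold in_box, d1, d2, d3; cbn [x1 x2 x3 mk3 fst snd].
  rewrite !Rminus_diag, Rabs_R0.
  pose proof (Rabs_pos (x1 x - x1 p)); pose proof (Rabs_pos (x2 x - x2 p)).
  pose proof (Rabs_pos (x3 x - x3 p)).
  repeat split; try lra.
  rewrite <- M1, <- M2, <- M3, !mk3_eta. ring.
Qed.

Lemma partials_differentiable (g : Vec3 -> R) (p : Vec3) : partials3 g ->
  continuous (d1 g) p -> continuous (d2 g) p -> continuous (d3 g) p ->
  forall e, 0 < e -> exists d, 0 < d /\ forall x,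
    Rabs (x1 x - x1 p) < d -> Rabs (x2 x - x2 p) < d -> Rabs (x3 x - x3 p) < d ->
    Rabs (g x - g p - (d1 g p * (x1 x - x1 p) + d2 g p * (x2 x - x2 p) + d3 g p * (x3 x - x3 p)))
    <= e * (Rabs (x1 x - x1 p) + Rabs (x2 x - x2 p) + Rabs (x3 x - x3 p)).
Proof.
  intros Hg C1 C2 C3 e He.
  destruct (continuous_Vec3_eps _ _ C1 e He) as [c1 [P1 D1]].
  destruct (continuous_Vec3_eps _ _ C2 e He) as [c2 [P2 D2]].
  destruct (continuous_Vec3_eps _ _ C3 e He) as [c3 [P3 D3]].
  exists (Rmin c1 (Rmin c2 c3)); split; [repeat apply Rmin_pos; assumption|].
  intros x h1 h2 h3.
  assert (Hc1 := Rmin_l c1 (Rmin c2 c3)); assert (Hc2 := Rmin_l c2 c3);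
  assert (Hc3 := Rmin_r c2 c3); assert (Hc23 := Rmin_r c1 (Rmin c2 c3)).
  destruct (increment_partials3 g p x Hg) as (y1 & y2 & y3 & (b11 & b12 & b13) &
    (b21 & b22 & b23) & (b31 & b32 & b33) & ->).
  assert (E1 : Rabs (d1 g y1 - d1 g p) < e) by (apply D1; lra).
  assert (E2 : Rabs (d2 g y2 - d2 g p) < e) by (apply D2; lra).
  assert (E3 : Rabs (d3 g y3 - d3 g p) < e) by (apply D3; lra).
  set (u1 := x1 x - x1 p) in *; set (u2 := x2 x - x2 p) in *; set (u3 := x3 x - x3 p) in *.
  replace (_ - _) with ((d1 g y1 - d1 g p) * u1 + (d2 g y2 - d2 g p) * u2
    + (d3 g y3 - d3 g p) * u3) by ring.
  eapply Rle_trans; [apply Rabs_triang|].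
  eapply Rle_trans; [apply Rplus_le_compat_r, Rabs_triang|].
  rewrite !Rabs_mult.
  pose proof (Rabs_pos u1); pose proof (Rabs_pos u2); pose proof (Rabs_pos u3).
  nra.
Qed.

Lemma derive_quotient_bounded (f : R -> R) (t0 l : R) : is_derive f t0 l ->
  exists r, 0 < r /\ forall h, h <> 0 -> Rabs h < r -> Rabs ((f (t0 + h) - f t0) / h) <= Rabs l + 1.
Proof.
  intros D. apply is_derive_Reals in D. destruct (D 1 Rlt_0_1) as [r Hr].
  exists r; split; [apply cond_pos|]. intros h hnz hr. specialize (Hr h hnz hr).
  pose proof (Rabs_triang_inv ((f (t0 + h) - f t0) / h) l). lra.
Qed.

Lemma is_derive_remainder3 (g : Vec3 -> R) (gam : R -> Vec3) (t0 : R) (v : Vec3) :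
  partials3 g -> continuous (d1 g) (gam t0) -> continuous (d2 g) (gam t0) ->
  continuous (d3 g) (gam t0) ->
  is_derive (fun t => x1 (gam t)) t0 (x1 v) -> is_derive (fun t => x2 (gam t)) t0 (x2 v) ->
  is_derive (fun t => x3 (gam t)) t0 (x3 v) ->
  is_derive (fun t => g (gam t) - (d1 g (gam t0) * x1 (gam t) + d2 g (gam t0) * x2 (gam t)
                                   + d3 g (gam t0) * x3 (gam t))) t0 0.
Proof.
  intros Hg C1 C2 C3 D1 D2 D3. apply is_derive_Reals. intros eps Heps.
  set (V := Rabs (x1 v) + Rabs (x2 v) + Rabs (x3 v) + 3).
  assert (HV : 0 < V) by (unfold V; pose proof (Rabs_pos (x1 v));
    pose proof (Rabs_pos (x2 v)); pose proof (Rabs_pos (x3 v)); lra).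
  destruct (partials_differentiable g (gam t0) Hg C1 C2 C3 (eps / (2 * V))) as [d [Hd Fr]].
  { apply Rdiv_lt_0_compat; lra. }
  destruct (derive_quotient_bounded _ _ _ D1) as [r1 [P1 B1]];
  destruct (derive_quotient_bounded _ _ _ D2) as [r2 [P2 B2]];
  destruct (derive_quotient_bounded _ _ _ D3) as [r3 [P3 B3]].
  assert (Hdel : 0 < Rmin (Rmin r1 r2) (Rmin r3 (d / V))).
  { repeat apply Rmin_pos; try assumption. apply Rdiv_lt_0_compat; lra. }
  exists (mkposreal _ Hdel). intros h hnz hlt; cbn in hlt.
  apply Rmin_Rgt in hlt as [hlt12 hlt3]; apply Rmin_Rgt in hlt12 as [hr1 hr2];
  apply Rmin_Rgt in hlt3 as [hr3 hdV].
  specialize (B1 h hnz hr1); specialize (B2 h hnz hr2); specialize (B3 h hnz hr3).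
  set (u1 := x1 (gam (t0 + h)) - x1 (gam t0)) in *;
  set (u2 := x2 (gam (t0 + h)) - x2 (gam t0)) in *;
  set (u3 := x3 (gam (t0 + h)) - x3 (gam t0)) in *.
  assert (Hh : 0 < Rabs h) by (apply Rabs_pos_lt; exact hnz).
  assert (Hu : Rabs u1 + Rabs u2 + Rabs u3 <= V * Rabs h).
  { replace u1 with (u1 / h * h) by (field; exact hnz);
    replace u2 with (u2 / h * h) by (field; exact hnz);
    replace u3 with (u3 / h * h) by (field; exact hnz).
    rewrite !Rabs_mult. unfold V. nra. }
  assert (Hud : V * Rabs h < d).
  { apply (Rmult_lt_reg_r (/ V)); [apply Rinv_0_lt_compat; lra|].
    replace (V * Rabs h * / V) with (Rabs h) by (field; lra). exact hdV. }
  pose proof (Rabs_pos u1); pose proof (Rabs_pos u2); pose proof (Rabs_pos u3).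
  specialize (Fr (gam (t0 + h)) ltac:(fold u1; lra) ltac:(fold u2; lra) ltac:(fold u3; lra)).
  fold u1 u2 u3 in Fr.
  replace (_ / h - 0) with ((g (gam (t0 + h)) - g (gam t0) - (d1 g (gam t0) * u1
    + d2 g (gam t0) * u2 + d3 g (gam t0) * u3)) / h) by (unfold u1, u2, u3; field; exact hnz).
  unfold Rdiv. rewrite Rabs_mult, Rabs_inv.
  apply (Rmult_lt_reg_r (Rabs h)); [exact Hh|].
  rewrite Rmult_assoc, Rinv_l, Rmult_1_r by lra.
  apply (Rle_lt_trans _ _ _ Fr).
  apply (Rle_lt_trans _ (eps / (2 * V) * (V * Rabs h))).
  - apply Rmult_le_compat_l; [apply Rlt_le, Rdiv_lt_0_compat|]; lra.
  - replace (eps / (2 * V) * (V * Rabs h)) with (eps * Rabs h / 2) by (field; lra). nra.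
Qed.

Lemma is_derive_comp3 (g : Vec3 -> R) (gam : R -> Vec3) (t0 : R) (v : Vec3) :
  partials3 g -> continuous (d1 g) (gam t0) -> continuous (d2 g) (gam t0) ->
  continuous (d3 g) (gam t0) ->
  is_derive (fun t => x1 (gam t)) t0 (x1 v) -> is_derive (fun t => x2 (gam t)) t0 (x2 v) ->
  is_derive (fun t => x3 (gam t)) t0 (x3 v) ->
  is_derive (fun t => g (gam t)) t0
    (d1 g (gam t0) * x1 v + d2 g (gam t0) * x2 v + d3 g (gam t0) * x3 v).
Proof.
  intros Hg C1 C2 C3 D1 D2 D3.
  pose proof (is_derive_remainder3 g gam t0 v Hg C1 C2 C3 D1 D2 D3) as Rem.
  set (g1 := d1 g (gam t0)) in *; set (g2 := d2 g (gam t0)) in *;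
  set (g3 := d3 g (gam t0)) in *.
  apply (is_derive_ext (fun t => (g (gam t) - (g1 * x1 (gam t) + g2 * x2 (gam t) + g3 * x3 (gam t)))
    + (g1 * x1 (gam t) + g2 * x2 (gam t) + g3 * x3 (gam t)))); [intros t; cbn; ring|].
  replace (g1 * x1 v + g2 * x2 v + g3 * x3 v)
    with (0 + (g1 * x1 v + g2 * x2 v + g3 * x3 v)) by ring.
  apply (is_derive_plus _ _ _ _ _ Rem).
  repeat apply (is_derive_plus (V := R_NormedModule)); apply is_derive_scal; assumption.
Qed.

(** * Smooth functions *)

Lemma Ck2_ext (k : nat) (f g : Pt2 -> R) : (forall q, f q = g q) -> Ck2 k f -> Ck2 k g.
Proof. intros H; replace g with f; [auto | apply functional_extensionality; auto]. Qed.

Lemma Ck2_plus (k : nat) (f g : Pt2 -> R) : Ck2 k f -> Ck2 k g -> Ck2 k (fun r => f r + g r).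
Proof.
  revert f g; induction k as [|k IH]; intros f g Hf Hg.
  - intros q. apply (continuous_plus (V := R_NormedModule) f g); [apply Hf | apply Hg].
  - destruct Hf as [Ef [Hfu Hfv]], Hg as [Eg [Hgu Hgv]].
    split; [|split]; [| apply (Ck2_ext _ (fun r => du f r + du g r))
      | apply (Ck2_ext _ (fun r => dv f r + dv g r))];
      try (apply IH; assumption); intros q; destruct (Ef q) as [F1 F2], (Eg q) as [G1 G2].
    + split; apply (ex_derive_plus (V := R_NormedModule)); assumption.
    + unfold du; rewrite Derive_plus by assumption; reflexivity.
    + unfold dv; rewrite Derive_plus by assumption; reflexivity.
Qed.

Lemma smooth2_const (c : R) : smooth2 (fun _ => c).
Proof.
  intros k; revert c; induction k as [|k IH]; intros c.
  - intros q; apply continuous_const.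
  - split; [|split].
    + intros q; split; apply ex_derive_const.
    + apply (Ck2_ext _ (fun _ => 0)); [|apply IH].
      intros q; symmetry; unfold du; apply Derive_const.
    + apply (Ck2_ext _ (fun _ => 0)); [|apply IH].
      intros q; symmetry; unfold dv; apply Derive_const.
Qed.

Lemma smooth2_du (f : Pt2 -> R) : smooth2 f -> smooth2 (du f).
Proof. intros H k; exact (proj1 (proj2 (H (S k)))). Qed.
Lemma smooth2_dv (f : Pt2 -> R) : smooth2 f -> smooth2 (dv f).
Proof. intros H k; exact (proj2 (proj2 (H (S k)))). Qed.
Lemma smooth2_ex_du (f : Pt2 -> R) (q : Pt2) :
  smooth2 f -> ex_derive (fun t => f (t, snd q)) (fst q).
Proof. intros H; exact (proj1 (proj1 (H 1%nat) q)). Qed.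
Lemma smooth2_ex_dv (f : Pt2 -> R) (q : Pt2) :
  smooth2 f -> ex_derive (fun t => f (fst q, t)) (snd q).
Proof. intros H; exact (proj2 (proj1 (H 1%nat) q)). Qed.

Section Partials2.
Variables (f g : Pt2 -> R) (q : Pt2).
Hypotheses (Hf : smooth2 f) (Hg : smooth2 g).

Lemma du_plus : du (fun r => f r + g r) q = du f q + du g q.
Proof. apply Derive_plus; apply smooth2_ex_du; assumption. Qed.
Lemma dv_plus : dv (fun r => f r + g r) q = dv f q + dv g q.
Proof. apply Derive_plus; apply smooth2_ex_dv; assumption. Qed.
Lemma du_mult : du (fun r => f r * g r) q = du f q * g q + f q * du g q.
Proof.
  unfold du; rewrite Derive_mult by (apply smooth2_ex_du; assumption).
  rewrite <- surjective_pairing; reflexivity.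
Qed.
Lemma dv_mult : dv (fun r => f r * g r) q = dv f q * g q + f q * dv g q.
Proof.
  unfold dv; rewrite Derive_mult by (apply smooth2_ex_dv; assumption).
  rewrite <- surjective_pairing; reflexivity.
Qed.
Lemma du_div : g q <> 0 -> du (fun r => f r / g r) q = (du f q * g q - f q * du g q) / (g q * g q).
Proof.
  intros Hq. unfold du; rewrite Derive_div; try (apply smooth2_ex_du; assumption).
  - rewrite <- surjective_pairing; cbn; field; exact Hq.
  - rewrite <- surjective_pairing; exact Hq.
Qed.
Lemma dv_div : g q <> 0 -> dv (fun r => f r / g r) q = (dv f q * g q - f q * dv g q) / (g q * g q).
Proof.
  intros Hq. unfold dv; rewrite Derive_div; try (apply smooth2_ex_dv; assumption).
  - rewrite <- surjective_pairing; cbn; field; exact Hq.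
  - rewrite <- surjective_pairing; exact Hq.
Qed.

End Partials2.

Lemma smooth2_plus (f g : Pt2 -> R) : smooth2 f -> smooth2 g -> smooth2 (fun r => f r + g r).
Proof. intros Hf Hg k; apply Ck2_plus; auto. Qed.

Lemma smooth2_mult (f g : Pt2 -> R) : smooth2 f -> smooth2 g -> smooth2 (fun r => f r * g r).
Proof.
  intros Hf Hg k; revert f g Hf Hg; induction k as [|k IH]; intros f g Hf Hg.
  - intros q; apply (continuous_mult (K := R_AbsRing) f g); [apply (Hf 0%nat) | apply (Hg 0%nat)].
  - split; [|split].
    + intros q; split; apply ex_derive_mult.
      * apply smooth2_ex_du, Hf.
      * apply smooth2_ex_du, Hg.
      * apply smooth2_ex_dv, Hf.
      * apply smooth2_ex_dv, Hg.
    + apply (Ck2_ext _ (fun r => du f r * g r + f r * du g r)).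
      { intros q; symmetry; apply du_mult; assumption. }
      apply Ck2_plus; apply IH; auto using smooth2_du.
    + apply (Ck2_ext _ (fun r => dv f r * g r + f r * dv g r)).
      { intros q; symmetry; apply dv_mult; assumption. }
      apply Ck2_plus; apply IH; auto using smooth2_dv.
Qed.

Lemma smooth2_opp (f : Pt2 -> R) : smooth2 f -> smooth2 (fun r => - f r).
Proof.
  intros Hf. replace (fun r => - f r) with (fun r => (-1) * f r)
    by (apply functional_extensionality; intros; ring).
  apply smooth2_mult; auto using smooth2_const.
Qed.

Lemma smooth2_minus (f g : Pt2 -> R) : smooth2 f -> smooth2 g -> smooth2 (fun r => f r - g r).
Proof. intros Hf Hg; apply smooth2_plus; auto using smooth2_opp. Qed.

Lemma smooth2_div (f g : Pt2 -> R) : smooth2 f -> smooth2 g -> (forall r, g r <> 0) ->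
  smooth2 (fun r => f r / g r).
Proof.
  intros Hf Hg Hnz k; revert f g Hf Hg Hnz; induction k as [|k IH]; intros f g Hf Hg Hnz.
  - intros q. apply (continuous_mult (K := R_AbsRing) f (fun r => / g r)); [apply (Hf 0%nat)|].
    apply continuous_comp; [apply (Hg 0%nat) | apply continuous_Rinv, Hnz].
  - split; [|split].
    + intros q; assert (Hq : g (fst q, snd q) <> 0) by (rewrite <- surjective_pairing; apply Hnz).
      split; apply ex_derive_div; try exact Hq.
      * exact (smooth2_ex_du f q Hf).
      * exact (smooth2_ex_du g q Hg).
      * exact (smooth2_ex_dv f q Hf).
      * exact (smooth2_ex_dv g q Hg).
    + apply (Ck2_ext _ (fun r => (du f r * g r - f r * du g r) / (g r * g r))).
      { intros q; symmetry; apply du_div; auto. }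
      apply IH.
      * apply smooth2_minus; apply smooth2_mult; auto using smooth2_du.
      * apply smooth2_mult; assumption.
      * intros r; apply Rmult_integral_contrapositive; auto.
    + apply (Ck2_ext _ (fun r => (dv f r * g r - f r * dv g r) / (g r * g r))).
      { intros q; symmetry; apply dv_div; auto. }
      apply IH.
      * apply smooth2_minus; apply smooth2_mult; auto using smooth2_dv.
      * apply smooth2_mult; assumption.
      * intros r; apply Rmult_integral_contrapositive; auto.
Qed.

Lemma Ck3_ext (k : nat) (f g : Vec3 -> R) : (forall x, f x = g x) -> Ck3 k f -> Ck3 k g.
Proof. intros H; replace g with f; [auto | apply functional_extensionality; auto]. Qed.

Lemma Ck3_plus (k : nat) (f g : Vec3 -> R) : Ck3 k f -> Ck3 k g -> Ck3 k (fun x => f x + g x).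
Proof.
  revert f g; induction k as [|k IH]; intros f g Hf Hg.
  - intros x. apply (continuous_plus (V := R_NormedModule) f g); [apply Hf | apply Hg].
  - destruct Hf as [Ef [Hf1 [Hf2 Hf3]]], Hg as [Eg [Hg1 [Hg2 Hg3]]].
    split; [|split; [|split]]; [| apply (Ck3_ext _ (fun x => d1 f x + d1 g x))
      | apply (Ck3_ext _ (fun x => d2 f x + d2 g x)) | apply (Ck3_ext _ (fun x => d3 f x + d3 g x))];
      try (apply IH; assumption); intros x; destruct (Ef x) as (F1 & F2 & F3), (Eg x) as (G1 & G2 & G3).
    + split; [|split]; apply (ex_derive_plus (V := R_NormedModule)); assumption.
    + unfold d1; rewrite Derive_plus by assumption; reflexivity.
    + unfold d2; rewrite Derive_plus by assumption; reflexivity.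
    + unfold d3; rewrite Derive_plus by assumption; reflexivity.
Qed.

Lemma smooth3_partials (f : Vec3 -> R) : smooth3 f -> partials3 f.
Proof. intros H; exact (proj1 (H 1%nat)). Qed.
Lemma smooth3_ex_d1 (f : Vec3 -> R) (x : Vec3) :
  smooth3 f -> ex_derive (fun t => f (mk3 t (x2 x) (x3 x))) (x1 x).
Proof. intros H; exact (proj1 (smooth3_partials f H x)). Qed.
Lemma smooth3_ex_d2 (f : Vec3 -> R) (x : Vec3) :
  smooth3 f -> ex_derive (fun t => f (mk3 (x1 x) t (x3 x))) (x2 x).
Proof. intros H; exact (proj1 (proj2 (smooth3_partials f H x))). Qed.
Lemma smooth3_ex_d3 (f : Vec3 -> R) (x : Vec3) :
  smooth3 f -> ex_derive (fun t => f (mk3 (x1 x) (x2 x) t)) (x3 x).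
Proof. intros H; exact (proj2 (proj2 (smooth3_partials f H x))). Qed.
Lemma smooth3_d1 (f : Vec3 -> R) : smooth3 f -> smooth3 (d1 f).
Proof. intros H k; exact (proj1 (proj2 (H (S k)))). Qed.
Lemma smooth3_d2 (f : Vec3 -> R) : smooth3 f -> smooth3 (d2 f).
Proof. intros H k; exact (proj1 (proj2 (proj2 (H (S k))))). Qed.
Lemma smooth3_d3 (f : Vec3 -> R) : smooth3 f -> smooth3 (d3 f).
Proof. intros H k; exact (proj2 (proj2 (proj2 (H (S k))))). Qed.

Section Partials3.
Variables (f g : Vec3 -> R) (x : Vec3).
Hypotheses (Hf : smooth3 f) (Hg : smooth3 g).

Lemma d1_plus : d1 (fun y => f y + g y) x = d1 f x + d1 g x.
Proof. apply Derive_plus; apply smooth3_ex_d1; assumption. Qed.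
Lemma d2_plus : d2 (fun y => f y + g y) x = d2 f x + d2 g x.
Proof. apply Derive_plus; apply smooth3_ex_d2; assumption. Qed.
Lemma d3_plus : d3 (fun y => f y + g y) x = d3 f x + d3 g x.
Proof. apply Derive_plus; apply smooth3_ex_d3; assumption. Qed.
Lemma d1_mult : d1 (fun y => f y * g y) x = d1 f x * g x + f x * d1 g x.
Proof.
  unfold d1; rewrite Derive_mult by (apply smooth3_ex_d1; assumption).
  rewrite mk3_eta; reflexivity.
Qed.
Lemma d2_mult : d2 (fun y => f y * g y) x = d2 f x * g x + f x * d2 g x.
Proof.
  unfold d2; rewrite Derive_mult by (apply smooth3_ex_d2; assumption).
  rewrite mk3_eta; reflexivity.
Qed.
Lemma d3_mult : d3 (fun y => f y * g y) x = d3 f x * g x + f x * d3 g x.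
Proof.
  unfold d3; rewrite Derive_mult by (apply smooth3_ex_d3; assumption).
  rewrite mk3_eta; reflexivity.
Qed.

End Partials3.

Lemma smooth3_plus (f g : Vec3 -> R) : smooth3 f -> smooth3 g -> smooth3 (fun x => f x + g x).
Proof. intros Hf Hg k; apply Ck3_plus; auto. Qed.

Lemma smooth3_mult (f g : Vec3 -> R) : smooth3 f -> smooth3 g -> smooth3 (fun x => f x * g x).
Proof.
  intros Hf Hg k; revert f g Hf Hg; induction k as [|k IH]; intros f g Hf Hg.
  - intros x; apply (continuous_mult (K := R_AbsRing) f g); [apply (Hf 0%nat) | apply (Hg 0%nat)].
  - split; [|split; [|split]].
    + intros x; repeat split; apply ex_derive_mult.
      * exact (smooth3_ex_d1 f x Hf).
      * exact (smooth3_ex_d1 g x Hg).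
      * exact (smooth3_ex_d2 f x Hf).
      * exact (smooth3_ex_d2 g x Hg).
      * exact (smooth3_ex_d3 f x Hf).
      * exact (smooth3_ex_d3 g x Hg).
    + apply (Ck3_ext _ (fun x => d1 f x * g x + f x * d1 g x)).
      { intros x; symmetry; apply d1_mult; assumption. }
      apply Ck3_plus; apply IH; auto using smooth3_d1.
    + apply (Ck3_ext _ (fun x => d2 f x * g x + f x * d2 g x)).
      { intros x; symmetry; apply d2_mult; assumption. }
      apply Ck3_plus; apply IH; auto using smooth3_d2.
    + apply (Ck3_ext _ (fun x => d3 f x * g x + f x * d3 g x)).
      { intros x; symmetry; apply d3_mult; assumption. }
      apply Ck3_plus; apply IH; auto using smooth3_d3.
Qed.

Lemma continuous_mk3 {U : UniformSpace} (a b c : U -> R) (w : U) :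
  continuous a w -> continuous b w -> continuous c w ->
  continuous (fun z => mk3 (a z) (b z) (c z)) w.
Proof.
  intros Ha Hb Hc. unfold mk3.
  assert (Pair : forall {V W : UniformSpace} (f : U -> V) (g : U -> W),
    continuous f w -> continuous g w -> continuous (fun z => (f z, g z)) w).
  { intros V W f g Hf Hg. apply (continuous_comp_2 f g pair); auto.
    apply (continuous_ext (fun z => z)); [intros [? ?]; reflexivity | apply continuous_id]. }
  apply Pair; [apply Pair|]; assumption.
Qed.

Lemma smooth_map23_continuous (phi : Pt2 -> Vec3) (q : Pt2) :
  smooth_map23 phi -> continuous phi q.
Proof.
  intros [P1 [P2 P3]].
  apply (continuous_ext (fun r => mk3 (x1 (phi r)) (x2 (phi r)) (x3 (phi r)))).
  { intros r; apply mk3_eta. }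
  apply continuous_mk3; [apply (P1 0%nat) | apply (P2 0%nat) | apply (P3 0%nat)].
Qed.

Section Chain.
Variables (g : Vec3 -> R) (phi : Pt2 -> Vec3) (q : Pt2).
Hypotheses (Hg : smooth3 g) (Hphi : smooth_map23 phi).

Lemma is_derive_comp_du : is_derive (fun t => g (phi (t, snd q))) (fst q)
  (d1 g (phi q) * x1 (pu phi q) + d2 g (phi q) * x2 (pu phi q) + d3 g (phi q) * x3 (pu phi q)).
Proof.
  destruct Hphi as [P1 [P2 P3]]. destruct q as [u w].
  apply (is_derive_comp3 g (fun t => phi (t, w)) u (pu phi (u, w))).
  - apply smooth3_partials, Hg.
  - apply (smooth3_d1 g Hg 0%nat).
  - apply (smooth3_d2 g Hg 0%nat).
  - apply (smooth3_d3 g Hg 0%nat).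
  - apply Derive_correct, (smooth2_ex_du _ (u, w) P1).
  - apply Derive_correct, (smooth2_ex_du _ (u, w) P2).
  - apply Derive_correct, (smooth2_ex_du _ (u, w) P3).
Qed.

Lemma is_derive_comp_dv : is_derive (fun t => g (phi (fst q, t))) (snd q)
  (d1 g (phi q) * x1 (pv phi q) + d2 g (phi q) * x2 (pv phi q) + d3 g (phi q) * x3 (pv phi q)).
Proof.
  destruct Hphi as [P1 [P2 P3]]. destruct q as [u w].
  apply (is_derive_comp3 g (fun t => phi (u, t)) w (pv phi (u, w))).
  - apply smooth3_partials, Hg.
  - apply (smooth3_d1 g Hg 0%nat).
  - apply (smooth3_d2 g Hg 0%nat).
  - apply (smooth3_d3 g Hg 0%nat).
  - apply Derive_correct, (smooth2_ex_dv _ (u, w) P1).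
  - apply Derive_correct, (smooth2_ex_dv _ (u, w) P2).
  - apply Derive_correct, (smooth2_ex_dv _ (u, w) P3).
Qed.

Lemma du_comp : du (fun r => g (phi r)) q =
  d1 g (phi q) * x1 (pu phi q) + d2 g (phi q) * x2 (pu phi q) + d3 g (phi q) * x3 (pu phi q).
Proof. apply is_derive_unique, is_derive_comp_du. Qed.

Lemma dv_comp : dv (fun r => g (phi r)) q =
  d1 g (phi q) * x1 (pv phi q) + d2 g (phi q) * x2 (pv phi q) + d3 g (phi q) * x3 (pv phi q).
Proof. apply is_derive_unique, is_derive_comp_dv. Qed.

End Chain.

(* The extra factor [h] makes the induction close: the partial derivatives of
   [(g o phi) * h] are again sums of terms of this shape. *)
Lemma smooth2_comp_mult (phi : Pt2 -> Vec3) (g : Vec3 -> R) (h : Pt2 -> R) :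
  smooth_map23 phi -> smooth3 g -> smooth2 h -> smooth2 (fun r => g (phi r) * h r).
Proof.
  intros Hphi Hg Hh k. revert g h Hg Hh. pose proof Hphi as [P1 [P2 P3]].
  induction k as [|k IH]; intros g h Hg Hh.
  - intros q. apply (continuous_mult (K := R_AbsRing) (fun r => g (phi r)) h); [|apply (Hh 0%nat)].
    apply (continuous_comp phi g); [apply smooth_map23_continuous | apply (Hg 0%nat)]; assumption.
  - split; [|split].
    + intros q; split; apply ex_derive_mult.
      * eexists; apply is_derive_comp_du; assumption.
      * apply smooth2_ex_du; assumption.
      * eexists; apply is_derive_comp_dv; assumption.
      * apply smooth2_ex_dv; assumption.
    + apply (Ck2_ext _ (fun r => d1 g (phi r) * (du (fun r => x1 (phi r)) r * h r)
        + d2 g (phi r) * (du (fun r => x2 (phi r)) r * h r)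
        + d3 g (phi r) * (du (fun r => x3 (phi r)) r * h r) + g (phi r) * du h r)).
      { intros q; symmetry. unfold du at 1. rewrite Derive_mult;
          [| eexists; apply is_derive_comp_du; assumption | apply smooth2_ex_du; assumption].
        rewrite <- surjective_pairing. fold (du (fun r => g (phi r)) q).
        rewrite du_comp by assumption. unfold pu, du; cbn. ring. }
      repeat apply Ck2_plus; apply IH; try apply smooth2_mult;
        auto using smooth3_d1, smooth3_d2, smooth3_d3, smooth2_du.
    + apply (Ck2_ext _ (fun r => d1 g (phi r) * (dv (fun r => x1 (phi r)) r * h r)
        + d2 g (phi r) * (dv (fun r => x2 (phi r)) r * h r)
        + d3 g (phi r) * (dv (fun r => x3 (phi r)) r * h r) + g (phi r) * dv h r)).
      { intros q; symmetry. unfold dv at 1. rewrite Derive_mult;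
          [| eexists; apply is_derive_comp_dv; assumption | apply smooth2_ex_dv; assumption].
        rewrite <- surjective_pairing. fold (dv (fun r => g (phi r)) q).
        rewrite dv_comp by assumption. unfold pv, dv; cbn. ring. }
      repeat apply Ck2_plus; apply IH; try apply smooth2_mult;
        auto using smooth3_d1, smooth3_d2, smooth3_d3, smooth2_dv.
Qed.

Lemma smooth2_comp (phi : Pt2 -> Vec3) (g : Vec3 -> R) :
  smooth_map23 phi -> smooth3 g -> smooth2 (fun r => g (phi r)).
Proof.
  intros Hphi Hg. replace (fun r => g (phi r)) with (fun r => g (phi r) * 1)
    by (apply functional_extensionality; intros; ring).
  apply smooth2_comp_mult; auto using smooth2_const.
Qed.

(** * Symmetry of second derivatives *)

Lemma Schwarz_global (f : R -> R -> R) (x y : R) :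
  (forall u v, ex_derive (fun z => f z v) u /\ ex_derive (fun z => f u z) v
    /\ ex_derive (fun z => Derive (fun t => f z t) v) u
    /\ ex_derive (fun z => Derive (fun t => f t z) u) v) ->
  continuous (fun w : R * R => Derive (fun z => Derive (fun t => f z t) (snd w)) (fst w)) (x, y) ->
  continuous (fun w : R * R => Derive (fun z => Derive (fun t => f t z) (fst w)) (snd w)) (x, y) ->
  Derive (fun z => Derive (fun t => f z t) y) x = Derive (fun z => Derive (fun t => f t z) x) y.
Proof.
  intros Hd C12 C21. apply Schwarz.
  - apply locally_2d_forall; exact Hd.
  - apply continuity_2d_pt_filterlim; exact C12.
  - apply continuity_2d_pt_filterlim; exact C21.
Qed.

Lemma du_dv (f : Pt2 -> R) (q : Pt2) : smooth2 f -> du (dv f) q = dv (du f) q.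
Proof.
  intros Hf. destruct q as [x y].
  refine (Schwarz_global (fun a b => f (a, b)) _ _ _ _ _).
  - intros u v; repeat split.
    + exact (smooth2_ex_du f (u, v) Hf).
    + exact (smooth2_ex_dv f (u, v) Hf).
    + exact (smooth2_ex_du (dv f) (u, v) (smooth2_dv f Hf)).
    + exact (smooth2_ex_dv (du f) (u, v) (smooth2_du f Hf)).
  - apply (continuous_ext (du (dv f))); [intros [a b]; reflexivity|].
    exact (smooth2_du _ (smooth2_dv f Hf) 0%nat (x, y)).
  - apply (continuous_ext (dv (du f))); [intros [a b]; reflexivity|].
    exact (smooth2_dv _ (smooth2_du f Hf) 0%nat (x, y)).
Qed.

Section Schwarz3.
Variables (f : Vec3 -> R).
Hypothesis (Hf : smooth3 f).

Lemma d1_d2 (p : Vec3) : d1 (d2 f) p = d2 (d1 f) p.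
Proof.
  destruct p as [[x y] c].
  refine (Schwarz_global (fun a b => f (mk3 a b c)) _ _ _ _ _).
  - intros u v; repeat split.
    + exact (smooth3_ex_d1 f (mk3 u v c) Hf).
    + exact (smooth3_ex_d2 f (mk3 u v c) Hf).
    + exact (smooth3_ex_d1 (d2 f) (mk3 u v c) (smooth3_d2 f Hf)).
    + exact (smooth3_ex_d2 (d1 f) (mk3 u v c) (smooth3_d1 f Hf)).
  - apply (continuous_comp (fun w => mk3 (fst w) (snd w) c) (d1 (d2 f))).
    + apply continuous_mk3; [apply continuous_fst | apply continuous_snd | apply continuous_const].
    + exact (smooth3_d1 _ (smooth3_d2 f Hf) 0%nat _).
  - apply (continuous_comp (fun w => mk3 (fst w) (snd w) c) (d2 (d1 f))).
    + apply continuous_mk3; [apply continuous_fst | apply continuous_snd | apply continuous_const].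
    + exact (smooth3_d2 _ (smooth3_d1 f Hf) 0%nat _).
Qed.

Lemma d1_d3 (p : Vec3) : d1 (d3 f) p = d3 (d1 f) p.
Proof.
  destruct p as [[x c] y].
  refine (Schwarz_global (fun a b => f (mk3 a c b)) _ _ _ _ _).
  - intros u v; repeat split.
    + exact (smooth3_ex_d1 f (mk3 u c v) Hf).
    + exact (smooth3_ex_d3 f (mk3 u c v) Hf).
    + exact (smooth3_ex_d1 (d3 f) (mk3 u c v) (smooth3_d3 f Hf)).
    + exact (smooth3_ex_d3 (d1 f) (mk3 u c v) (smooth3_d1 f Hf)).
  - apply (continuous_comp (fun w => mk3 (fst w) c (snd w)) (d1 (d3 f))).
    + apply continuous_mk3; [apply continuous_fst | apply continuous_const | apply continuous_snd].
    + exact (smooth3_d1 _ (smooth3_d3 f Hf) 0%nat _).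
  - apply (continuous_comp (fun w => mk3 (fst w) c (snd w)) (d3 (d1 f))).
    + apply continuous_mk3; [apply continuous_fst | apply continuous_const | apply continuous_snd].
    + exact (smooth3_d3 _ (smooth3_d1 f Hf) 0%nat _).
Qed.

Lemma d2_d3 (p : Vec3) : d2 (d3 f) p = d3 (d2 f) p.
Proof.
  destruct p as [[c x] y].
  refine (Schwarz_global (fun a b => f (mk3 c a b)) _ _ _ _ _).
  - intros u v; repeat split.
    + exact (smooth3_ex_d2 f (mk3 c u v) Hf).
    + exact (smooth3_ex_d3 f (mk3 c u v) Hf).
    + exact (smooth3_ex_d2 (d3 f) (mk3 c u v) (smooth3_d3 f Hf)).
    + exact (smooth3_ex_d3 (d2 f) (mk3 c u v) (smooth3_d2 f Hf)).
  - apply (continuous_comp (fun w => mk3 c (fst w) (snd w)) (d2 (d3 f))).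
    + apply continuous_mk3; [apply continuous_const | apply continuous_fst | apply continuous_snd].
    + exact (smooth3_d2 _ (smooth3_d3 f Hf) 0%nat _).
  - apply (continuous_comp (fun w => mk3 c (fst w) (snd w)) (d3 (d2 f))).
    + apply continuous_mk3; [apply continuous_const | apply continuous_fst | apply continuous_snd].
    + exact (smooth3_d3 _ (smooth3_d2 f Hf) 0%nat _).
Qed.

End Schwarz3.

(** * The snm-connection on R^3 *)

Ltac vsimpl := unfold vdot, vsub, vadd, vopp, vscal; cbn [x1 x2 x3 mk3 fst snd].

Lemma vdot_sym (u w : Vec3) : vdot u w = vdot w u.
Proof. vsimpl; ring. Qed.
Lemma vdot_addl (u w z : Vec3) : vdot (vadd u w) z = vdot u z + vdot w z.
Proof. vsimpl; ring. Qed.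
Lemma vdot_subl (u w z : Vec3) : vdot (vsub u w) z = vdot u z - vdot w z.
Proof. vsimpl; ring. Qed.
Lemma vdot_scall (a : R) (u z : Vec3) : vdot (vscal a u) z = a * vdot u z.
Proof. vsimpl; ring. Qed.

Definition dfield3 (C : Vec3 -> Vec3) (v p : Vec3) : Vec3 := nabla0 (fun _ => v) C p.

Definition omega (C : Vec3 -> Vec3) (v w p : Vec3) : R :=
  vdot (dfield3 C v p) w - vdot (C p) v * vdot (C p) w.

Ltac smooth3_auto := repeat match goal with
  | |- smooth3 (d1 _) => apply smooth3_d1
  | |- smooth3 (d2 _) => apply smooth3_d2
  | |- smooth3 (d3 _) => apply smooth3_d3
  | |- smooth3 (fun _ => _ + _) => apply smooth3_plus
  | |- smooth3 (fun _ => _ * _) => apply smooth3_mult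
  | |- _ => assumption
  end.

Lemma curvT_omega (C X Y Z : Vec3 -> Vec3) (p : Vec3) :
  smooth_field3 C -> smooth_field3 X -> smooth_field3 Y -> smooth_field3 Z ->
  curvT C X Y Z p
  = vsub (vscal (omega C (X p) (Z p) p) (Y p)) (vscal (omega C (Y p) (Z p) p) (X p)).
Proof.
  intros [C1 [C2 C3]] [X1 [X2 X3]] [Y1 [Y2 Y3]] [Z1 [Z2 Z3]].
  unfold curvT, snm, lie3, omega, dfield3, nabla0, ddir3. vsimpl.
  apply Vec3_eq; cbn [x1 x2 x3 mk3 fst snd];
  repeat first
    [ rewrite d1_plus by smooth3_auto | rewrite d2_plus by smooth3_auto
    | rewrite d3_plus by smooth3_auto | rewrite d1_mult by smooth3_auto
    | rewrite d2_mult by smooth3_auto | rewrite d3_mult by smooth3_auto ];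
  rewrite ?(d1_d2 _ Z1), ?(d1_d2 _ Z2), ?(d1_d2 _ Z3), ?(d1_d3 _ Z1), ?(d1_d3 _ Z2),
    ?(d1_d3 _ Z3), ?(d2_d3 _ Z1), ?(d2_d3 _ Z2), ?(d2_d3 _ Z3); ring.
Qed.

Lemma secT_omega (C F1 F2 : Vec3 -> Vec3) (p : Vec3) :
  smooth_field3 C -> smooth_field3 F1 -> smooth_field3 F2 ->
  vdot (F1 p) (F1 p) = 1 -> vdot (F2 p) (F2 p) = 1 -> vdot (F1 p) (F2 p) = 0 ->
  secT C F1 F2 p = - / 2 * (omega C (F1 p) (F1 p) p + omega C (F2 p) (F2 p) p).
Proof.
  intros HC H1 H2 e11 e22 e12. unfold secT.
  rewrite !curvT_omega, !vdot_subl, !vdot_scall, (vdot_sym (F2 p) (F1 p)), e11, e22, e12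
    by assumption.
  ring.
Qed.

Ltac smooth2_auto := repeat first
  [ assumption | apply smooth2_minus | apply smooth2_plus | apply smooth2_opp | apply smooth2_mult
  | apply smooth2_const | apply smooth2_du | apply smooth2_dv ].

(** * Calculus along the surface *)

Section DirectionalDerivative.
Variables (X : Pt2 -> Pt2) (f g : Pt2 -> R) (q : Pt2).
Hypotheses (Hf : smooth2 f) (Hg : smooth2 g).

Lemma dS_plus : dS X (fun r => f r + g r) q = dS X f q + dS X g q.
Proof. unfold dS; rewrite du_plus, dv_plus by assumption; ring. Qed.
Lemma dS_mult : dS X (fun r => f r * g r) q = dS X f q * g q + f q * dS X g q.
Proof. unfold dS; rewrite du_mult, dv_mult by assumption; ring. Qed.

End DirectionalDerivative.

Lemma dS_lieS (X Y : Pt2 -> Pt2) (f : Pt2 -> R) (q : Pt2) :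
  smooth_map22 X -> smooth_map22 Y -> smooth2 f ->
  dS X (dS Y f) q = dS Y (dS X f) q + dS (lieS X Y) f q.
Proof.
  intros [X1 X2] [Y1 Y2] Hf. unfold lieS, dS; cbn [fst snd].
  rewrite !du_plus, !dv_plus, !du_mult, !dv_mult by smooth2_auto.
  rewrite du_dv by assumption. ring.
Qed.

Section SmoothFieldsAlongPhi.
Variables (A B : Pt2 -> Vec3).
Hypotheses (HA : smooth_map23 A) (HB : smooth_map23 B).

Lemma smooth_map23_vadd : smooth_map23 (fun r => vadd (A r) (B r)).
Proof. destruct HA as [A1 [A2 A3]], HB as [B1 [B2 B3]]; vsimpl; repeat split; smooth2_auto. Qed.
Lemma smooth_map23_vsub : smooth_map23 (fun r => vsub (A r) (B r)).
Proof. destruct HA as [A1 [A2 A3]], HB as [B1 [B2 B3]]; vsimpl; repeat split; smooth2_auto. Qed.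
Lemma smooth_map23_vscal (s : Pt2 -> R) : smooth2 s -> smooth_map23 (fun r => vscal (s r) (A r)).
Proof. destruct HA as [A1 [A2 A3]]; intros Hs; vsimpl; repeat split; smooth2_auto. Qed.
Lemma smooth2_vdot : smooth2 (fun r => vdot (A r) (B r)).
Proof. destruct HA as [A1 [A2 A3]], HB as [B1 [B2 B3]]; vsimpl; smooth2_auto. Qed.
Lemma smooth_map23_nabla0S (X : Pt2 -> Pt2) : smooth_map22 X -> smooth_map23 (nabla0S X A).
Proof.
  destruct HA as [A1 [A2 A3]]; intros [X1 X2].
  unfold nabla0S, dS; cbn [x1 x2 x3 mk3 fst snd]; repeat split; smooth2_auto.
Qed.

Lemma dS_vdot (X : Pt2 -> Pt2) (q : Pt2) :
  dS X (fun r => vdot (A r) (B r)) q = vdot (nabla0S X A q) (B q) + vdot (A q) (nabla0S X B q).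
Proof.
  destruct HA as [A1 [A2 A3]], HB as [B1 [B2 B3]]. unfold vdot, nabla0S.
  cbn [x1 x2 x3 mk3 fst snd].
  rewrite !dS_plus, !dS_mult by smooth2_auto. ring.
Qed.

Lemma nabla0S_vadd (X : Pt2 -> Pt2) (q : Pt2) :
  nabla0S X (fun r => vadd (A r) (B r)) q = vadd (nabla0S X A q) (nabla0S X B q).
Proof.
  destruct HA as [A1 [A2 A3]], HB as [B1 [B2 B3]]. unfold nabla0S; vsimpl.
  rewrite !dS_plus by assumption. reflexivity.
Qed.

Lemma nabla0S_vscal (X : Pt2 -> Pt2) (s : Pt2 -> R) (q : Pt2) : smooth2 s ->
  nabla0S X (fun r => vscal (s r) (A r)) q
  = vadd (vscal (dS X s q) (A q)) (vscal (s q) (nabla0S X A q)).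
Proof.
  destruct HA as [A1 [A2 A3]]; intros Hs. unfold nabla0S; vsimpl.
  rewrite !dS_mult by assumption. reflexivity.
Qed.

Lemma nabla0S_lieS (X Y : Pt2 -> Pt2) (q : Pt2) : smooth_map22 X -> smooth_map22 Y ->
  nabla0S X (nabla0S Y A) q = vadd (nabla0S Y (nabla0S X A) q) (nabla0S (lieS X Y) A q).
Proof.
  destruct HA as [A1 [A2 A3]]; intros HX HY.
  unfold nabla0S; vsimpl. apply Vec3_eq; cbn [x1 x2 x3 mk3 fst snd]; apply dS_lieS; assumption.
Qed.

End SmoothFieldsAlongPhi.

Section Immersion.
Variables (phi : Pt2 -> Vec3).
Hypothesis (Hphi : smooth_map23 phi).

Lemma smooth_map23_pu : smooth_map23 (pu phi).
Proof.
  destruct Hphi as [P1 [P2 P3]]; unfold pu; cbn [x1 x2 x3 mk3 fst snd]; repeat split; smooth2_auto.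
Qed.
Lemma smooth_map23_pv : smooth_map23 (pv phi).
Proof.
  destruct Hphi as [P1 [P2 P3]]; unfold pv; cbn [x1 x2 x3 mk3 fst snd]; repeat split; smooth2_auto.
Qed.
Lemma smooth_map23_realize (X : Pt2 -> Pt2) : smooth_map22 X -> smooth_map23 (realize phi X).
Proof.
  intros [X1 X2]. unfold realize.
  apply smooth_map23_vadd; apply smooth_map23_vscal; auto using smooth_map23_pu, smooth_map23_pv.
Qed.
Lemma smooth_map23_field (C : Vec3 -> Vec3) : smooth_field3 C -> smooth_map23 (fun r => C (phi r)).
Proof.
  intros [C1 [C2 C3]]; repeat split;
    [apply (smooth2_comp phi (fun y => x1 (C y))) | apply (smooth2_comp phi (fun y => x2 (C y)))
    | apply (smooth2_comp phi (fun y => x3 (C y)))]; assumption.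
Qed.

Lemma nabla0S_field (C : Vec3 -> Vec3) (X : Pt2 -> Pt2) (q : Pt2) : smooth_field3 C ->
  nabla0S X (fun r => C (phi r)) q = dfield3 C (realize phi X q) (phi q).
Proof.
  intros [C1 [C2 C3]].
  unfold nabla0S, dS, dfield3, nabla0, ddir3, realize; vsimpl.
  rewrite (du_comp (fun y => x1 (C y))), (du_comp (fun y => x2 (C y))),
    (du_comp (fun y => x3 (C y))), (dv_comp (fun y => x1 (C y))), (dv_comp (fun y => x2 (C y))),
    (dv_comp (fun y => x3 (C y))) by assumption.
  apply Vec3_eq; cbn [x1 x2 x3 mk3 fst snd]; ring.
Qed.

Lemma nabla0S_torsion_free (X Y : Pt2 -> Pt2) (q : Pt2) : smooth_map22 X -> smooth_map22 Y ->
  nabla0S X (realize phi Y) q = vadd (nabla0S Y (realize phi X) q) (realize phi (lieS X Y) q).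
Proof.
  destruct Hphi as [P1 [P2 P3]]; intros HX HY.
  apply Vec3_eq; unfold nabla0S, vadd; cbn [x1 x2 x3 mk3 fst snd].
  - exact (dS_lieS X Y (fun r => x1 (phi r)) q HX HY P1).
  - exact (dS_lieS X Y (fun r => x2 (phi r)) q HX HY P2).
  - exact (dS_lieS X Y (fun r => x3 (phi r)) q HX HY P3).
Qed.

End Immersion.

Lemma vdot_tang (N : Pt2 -> Vec3) (w : Vec3) (q : Pt2) (v : Vec3) :
  vdot (tang N w q) v = vdot w v - vdot w (N q) * vdot (N q) v.
Proof. unfold tang; vsimpl; ring. Qed.

Lemma unit_normal_realize (phi N : Pt2 -> Vec3) (X : Pt2 -> Pt2) (r : Pt2) :
  unit_normal phi N -> vdot (N r) (realize phi X r) = 0.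
Proof.
  intros H. destruct (H r) as [hu [hv _]].
  unfold realize. rewrite vdot_sym, vdot_addl, !vdot_scall, !(vdot_sym _ (N r)), hu, hv. ring.
Qed.

Definition cross (a b : Vec3) : Vec3 :=
  mk3 (x2 a * x3 b - x3 a * x2 b) (x3 a * x1 b - x1 a * x3 b) (x1 a * x2 b - x2 a * x1 b).

Lemma vdot_cross_cross (a b : Vec3) :
  vdot (cross a b) (cross a b) = vdot a a * vdot b b - vdot a b ^ 2.
Proof. unfold cross; vsimpl; ring. Qed.

Lemma vdot_self_eq0 (w : Vec3) : vdot w w = 0 -> w = mk3 0 0 0.
Proof. unfold vdot; intros H; apply Vec3_eq; cbn; nra. Qed.

Lemma immersion_gram_neq0 (phi : Pt2 -> Vec3) (q : Pt2) :
  immersion phi -> fE phi q * fG phi q - fF phi q ^ 2 <> 0.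
Proof.
  intros Him Hd. unfold fE, fF, fG in Hd.
  set (a := pu phi q) in *; set (b := pv phi q) in *.
  destruct (Req_dec (vdot b b) 0) as [Hb | Hb].
  - apply vdot_self_eq0 in Hb.
    destruct (Him q 0 1) as [_ H]; [|lra].
    fold a b; rewrite Hb; apply Vec3_eq; vsimpl; ring.
  - (* [|b|^2 a - <a,b> b] has squared length [|b|^2 (EG - F^2)]. *)
    destruct (Him q (vdot b b) (- vdot a b)) as [H _]; [|contradiction].
    apply vdot_self_eq0. fold a b.
    transitivity (vdot b b * (vdot a a * vdot b b - vdot a b ^ 2)); [vsimpl; ring|].
    rewrite Hd; ring.
Qed.

Lemma normal_parallel_cross (n a b : Vec3) : vdot n a = 0 -> vdot n b = 0 ->
  vscal (vdot (cross a b) (cross a b)) n = vscal (vdot n (cross a b)) (cross a b).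
Proof.
  intros Ha Hb.
  assert (Triple :
    vsub (vscal (vdot (cross a b) (cross a b)) n) (vscal (vdot n (cross a b)) (cross a b))
    = vsub (vscal (vdot n b) (cross (cross a b) a)) (vscal (vdot n a) (cross (cross a b) b)))
    by (unfold cross; apply Vec3_eq; vsimpl; ring).
  rewrite Ha, Hb in Triple.
  pose proof (f_equal x1 Triple); pose proof (f_equal x2 Triple); pose proof (f_equal x3 Triple).
  revert H H0 H1; vsimpl; intros; apply Vec3_eq; vsimpl; lra.
Qed.

Lemma proj_unit_parallel (n c w : Vec3) : vdot n n = 1 -> vdot c c <> 0 ->
  vscal (vdot c c) n = vscal (vdot n c) c ->
  vscal (vdot w n) n = vscal (vdot w c / vdot c c) c.
Proof.
  intros Hnn Hs Hpar. set (s := vdot c c) in *. set (k := vdot n c) in *.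
  assert (En : n = vscal (k / s) c).
  { apply Vec3_eq; [apply (f_equal x1) in Hpar | apply (f_equal x2) in Hpar
      | apply (f_equal x3) in Hpar]; revert Hpar; vsimpl; intros Hpar;
    apply (Rmult_eq_reg_l s); auto; rewrite Hpar; field; exact Hs. }
  assert (Hk : k * k = s).
  { rewrite En, vdot_scall, vdot_sym, vdot_scall in Hnn. fold s in Hnn.
    apply (Rmult_eq_reg_r (/ s)); [|apply Rinv_neq_0_compat; exact Hs].
    rewrite Rinv_r by exact Hs. rewrite <- Hnn. field. exact Hs. }
  rewrite En, vdot_sym, vdot_scall, (vdot_sym c w).
  apply Vec3_eq; unfold vscal; cbn [x1 x2 x3 mk3 fst snd].
  all: match goal with |- _ = _ * ?ci =>
    transitivity (vdot w c * (k * k) / (s * s) * ci); [field | rewrite Hk; field]; exact Hs end.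
Qed.

Section TangentialPart.
Variables (phi N : Pt2 -> Vec3).
Hypotheses (Hphi : smooth_map23 phi) (Him : immersion phi) (HN : unit_normal phi N).

(* The tangential projection does not depend on the choice of [N], which is not
   assumed differentiable: it is the projection along [phi_u x phi_v]. *)
Lemma tang_eq_cross (w : Vec3) (r : Pt2) :
  let c := cross (pu phi r) (pv phi r) in tang N w r = vsub w (vscal (vdot w c / vdot c c) c).
Proof.
  intros c. destruct (HN r) as [hu [hv hn]].
  assert (Hc : vdot c c <> 0).
  { unfold c; rewrite vdot_cross_cross; exact (immersion_gram_neq0 phi r Him). }
  unfold tang; rewrite (proj_unit_parallel (N r) c w hn Hc); [reflexivity|].
  apply normal_parallel_cross; assumption.
Qed.

Lemma smooth_map23_tang (U : Pt2 -> Vec3) :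
  smooth_map23 U -> smooth_map23 (fun r => tang N (U r) r).
Proof.
  intros HU.
  replace (fun r => tang N (U r) r) with (fun r => vsub (U r)
    (vscal (vdot (U r) (cross (pu phi r) (pv phi r))
           / vdot (cross (pu phi r) (pv phi r)) (cross (pu phi r) (pv phi r)))
           (cross (pu phi r) (pv phi r))))
    by (apply functional_extensionality; intros r; symmetry; apply tang_eq_cross).
  assert (Hc : smooth_map23 (fun r => cross (pu phi r) (pv phi r))).
  { pose proof (smooth_map23_pu phi Hphi) as [A1 [A2 A3]].
    pose proof (smooth_map23_pv phi Hphi) as [B1 [B2 B3]].
    unfold cross; cbn [x1 x2 x3 mk3 fst snd]; repeat split; smooth2_auto. }
  apply smooth_map23_vsub; [exact HU|]. apply smooth_map23_vscal; [exact Hc|].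
  apply smooth2_div; try apply smooth2_vdot; try assumption.
  intros r; rewrite vdot_cross_cross; exact (immersion_gram_neq0 phi r Him).
Qed.

End TangentialPart.

(** * The Gauss equation of the induced connection *)

Definition snmS (C : Vec3 -> Vec3) (phi : Pt2 -> Vec3) (X : Pt2 -> Pt2) (W : Pt2 -> Vec3)
    (q : Pt2) : Vec3 :=
  vadd (nabla0S X W q) (vscal (vdot (C (phi q)) (W q)) (realize phi X q)).

Definition sff (N : Pt2 -> Vec3) (X : Pt2 -> Pt2) (W : Pt2 -> Vec3) (q : Pt2) : R :=
  vdot (nabla0S X W q) (N q).

Definition omegaS (C : Vec3 -> Vec3) (phi N : Pt2 -> Vec3) (X Z : Pt2 -> Pt2) (q : Pt2) : R :=
  omega C (realize phi X q) (realize phi Z q) (phi q)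
  + vdot (C (phi q)) (N q) * sff N X (realize phi Z) q.

Section GaussEquation.
Variables (C : Vec3 -> Vec3) (phi N : Pt2 -> Vec3).
Hypotheses (HC : smooth_field3 C) (Hphi : smooth_map23 phi) (Him : immersion phi)
  (HN : unit_normal phi N).

Lemma vdot_nablaS_realize (X : Pt2 -> Pt2) (W : Pt2 -> Vec3) (E : Pt2 -> Pt2) (q : Pt2) :
  vdot (nablaS C phi N X W q) (realize phi E q) = vdot (snmS C phi X W q) (realize phi E q).
Proof.
  change (nablaS C phi N X W q) with (tang N (snmS C phi X W q) q).
  rewrite vdot_tang, (unit_normal_realize phi N E q HN). ring.
Qed.

Lemma smooth_map23_snmS (X : Pt2 -> Pt2) (W : Pt2 -> Vec3) :
  smooth_map22 X -> smooth_map23 W -> smooth_map23 (snmS C phi X W).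
Proof.
  intros HX HW. apply smooth_map23_vadd; [apply smooth_map23_nabla0S; assumption|].
  apply smooth_map23_vscal; [apply smooth_map23_realize; assumption|].
  apply smooth2_vdot; [apply smooth_map23_field|]; assumption.
Qed.

Lemma vdot_nablaS_nablaS (X Y Z E : Pt2 -> Pt2) (q : Pt2) :
  smooth_map22 X -> smooth_map22 Y -> smooth_map22 Z -> smooth_map22 E ->
  let U := snmS C phi Y (realize phi Z) in
  vdot (nablaS C phi N X (nablaS C phi N Y (realize phi Z)) q) (realize phi E q) =
    vdot (nabla0S X (nabla0S Y (realize phi Z)) q) (realize phi E q)
    + (vdot (dfield3 C (realize phi X q) (phi q)) (realize phi Z q)
       + vdot (C (phi q)) (nabla0S X (realize phi Z) q)) * vdot (realize phi Y q) (realize phi E q)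
    + vdot (C (phi q)) (realize phi Z q) * vdot (nabla0S X (realize phi Y) q) (realize phi E q)
    + vdot (U q) (N q) * vdot (N q) (nabla0S X (realize phi E) q)
    + vdot (C (phi q)) (tang N (U q) q) * vdot (realize phi X q) (realize phi E q).
Proof.
  intros HX HY HZ HE U.
  assert (HR : forall F, smooth_map22 F -> smooth_map23 (realize phi F))
    by (intros; apply smooth_map23_realize; assumption).
  assert (HU : smooth_map23 U) by (apply smooth_map23_snmS; auto).
  set (V := nablaS C phi N Y (realize phi Z)).
  assert (HV : smooth_map23 V) by (apply (smooth_map23_tang phi N Hphi Him HN U HU)).
  (* Leibniz rule for [<V, E>], and [<V, E> = <U, E>] since [E] is tangent. *)
  assert (Leib : vdot (nabla0S X V q) (realize phi E q) =
    dS X (fun r => vdot (U r) (realize phi E r)) q - vdot (V q) (nabla0S X (realize phi E) q)).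
  { replace (fun r => vdot (U r) (realize phi E r)) with (fun r => vdot (V r) (realize phi E r))
      by (apply functional_extensionality; intros r; apply vdot_nablaS_realize).
    rewrite (dS_vdot V (realize phi E) HV (HR E HE)). ring. }
  rewrite vdot_nablaS_realize. unfold snmS at 1. rewrite vdot_addl, vdot_scall, Leib.
  rewrite (dS_vdot U (realize phi E) HU (HR E HE)).
  assert (HCphi : smooth_map23 (fun r => C (phi r))) by (apply smooth_map23_field; assumption).
  assert (HCZ : smooth2 (fun r => vdot (C (phi r)) (realize phi Z r)))
    by (apply smooth2_vdot; auto).
  unfold U at 1, snmS.
  rewrite nabla0S_vadd, nabla0S_vscal, dS_vdot, nabla0S_field
    by auto using smooth_map23_nabla0S, smooth_map23_vscal.
  change (V q) with (tang N (U q) q). rewrite vdot_tang.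
  vsimpl. ring.
Qed.

Lemma vdot_curvS (X Y Z E : Pt2 -> Pt2) (q : Pt2) :
  smooth_map22 X -> smooth_map22 Y -> smooth_map22 Z -> smooth_map22 E ->
  vdot (curvS C phi N X Y Z q) (realize phi E q) =
    sff N Y (realize phi Z) q * sff N X (realize phi E) q
    - sff N X (realize phi Z) q * sff N Y (realize phi E) q
    + omegaS C phi N X Z q * vdot (realize phi Y q) (realize phi E q)
    - omegaS C phi N Y Z q * vdot (realize phi X q) (realize phi E q).
Proof.
  intros HX HY HZ HE.
  assert (nX : vdot (realize phi X q) (N q) = 0)
    by (rewrite vdot_sym; apply unit_normal_realize; assumption).
  assert (nY : vdot (realize phi Y q) (N q) = 0)
    by (rewrite vdot_sym; apply unit_normal_realize; assumption).
  unfold curvS. rewrite !vdot_subl, !vdot_nablaS_nablaS, vdot_nablaS_realize by assumption.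
  unfold snmS. rewrite vdot_addl, vdot_scall.
  rewrite (nabla0S_lieS (realize phi Z)), (nabla0S_torsion_free phi Hphi X Y q)
    by auto using smooth_map23_realize.
  rewrite !(vdot_sym (C (phi q)) (tang N _ q)), !vdot_tang, !vdot_addl, !vdot_scall, nX, nY.
  unfold omegaS, sff, omega. vsimpl. ring.
Qed.

End GaussEquation.

(** * Orthonormal frames and the shape operator *)

Definition form2 (a b c : R) (x y : Pt2) : R :=
  fst x * fst y * a + (fst x * snd y + snd x * fst y) * b + snd x * snd y * c.

Lemma vdot_realize (phi : Pt2 -> Vec3) (X Z : Pt2 -> Pt2) (q : Pt2) :
  vdot (realize phi X q) (realize phi Z q) = form2 (fE phi q) (fF phi q) (fG phi q) (X q) (Z q).
Proof. unfold realize, form2, fE, fF, fG; vsimpl; ring. Qed.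

Lemma nabla0S_coord (X : Pt2 -> Pt2) (W : Pt2 -> Vec3) (q : Pt2) :
  nabla0S X W q = vadd (vscal (fst (X q)) (nabla0S (fun _ => (1, 0)) W q))
                       (vscal (snd (X q)) (nabla0S (fun _ => (0, 1)) W q)).
Proof. unfold nabla0S, dS; apply Vec3_eq; vsimpl; ring. Qed.

Lemma nabla0S_pu_pv (phi : Pt2 -> Vec3) (q : Pt2) : smooth_map23 phi ->
  nabla0S (fun _ => (0, 1)) (pu phi) q = nabla0S (fun _ => (1, 0)) (pv phi) q.
Proof.
  intros [P1 [P2 P3]]. unfold nabla0S, dS, pu, pv; cbn [x1 x2 x3 mk3 fst snd].
  rewrite !Rmult_0_l, !Rmult_1_l, !Rplus_0_l, !Rplus_0_r, !du_dv by assumption.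
  reflexivity.
Qed.

Lemma sff_realize (phi N : Pt2 -> Vec3) (X Z : Pt2 -> Pt2) (q : Pt2) :
  smooth_map23 phi -> unit_normal phi N -> smooth_map22 Z ->
  sff N X (realize phi Z) q = form2 (hL phi N q) (hM phi N q) (hN phi N q) (X q) (Z q).
Proof.
  intros Hphi HN [Z1 Z2]. destruct (HN q) as [hu [hv _]].
  pose proof (smooth_map23_pu phi Hphi); pose proof (smooth_map23_pv phi Hphi).
  unfold sff, realize.
  rewrite nabla0S_vadd, !nabla0S_vscal by auto using smooth_map23_vscal.
  rewrite (nabla0S_coord X (pu phi)), (nabla0S_coord X (pv phi)), nabla0S_pu_pv by assumption.
  repeat rewrite ?vdot_addl, ?vdot_scall.
  rewrite !(vdot_sym _ (N q)), hu, hv.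
  unfold form2, hL, hM, hN. rewrite !(vdot_sym (N q)). ring.
Qed.

Section OrthonormalFrame.
Variables (E F G : R) (e1 e2 : Pt2).
Hypotheses (HD : E * G - F ^ 2 <> 0) (H11 : form2 E F G e1 e1 = 1)
  (H22 : form2 E F G e2 e2 = 1) (H12 : form2 E F G e1 e2 = 0).

(* With [P] the matrix of columns [e1], [e2], the hypotheses say [P^T I P = 1],
   hence [P P^T = I^-1] and [det P ^ 2 = 1 / det I]. *)
Lemma orthonormal_frame_outer :
  fst e1 * fst e1 + fst e2 * fst e2 = G / (E * G - F ^ 2)
  /\ fst e1 * snd e1 + fst e2 * snd e2 = - F / (E * G - F ^ 2)
  /\ snd e1 * snd e1 + snd e2 * snd e2 = E / (E * G - F ^ 2)
  /\ (fst e1 * snd e2 - fst e2 * snd e1) ^ 2 = / (E * G - F ^ 2).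
Proof.
  destruct e1 as [a1 b1], e2 as [a2 b2]; unfold form2 in *; cbn in *.
  set (dt := a1 * b2 - a2 * b1).
  assert (Hdet : dt ^ 2 * (E * G - F ^ 2) = 1).
  { transitivity (form2 E F G (a1, b1) (a1, b1) * form2 E F G (a2, b2) (a2, b2)
      - form2 E F G (a1, b1) (a2, b2) ^ 2); [unfold dt, form2; cbn; ring|].
    unfold form2; cbn; rewrite H11, H22, H12; ring. }
  assert (Hinv : dt ^ 2 = / (E * G - F ^ 2)).
  { apply (Rmult_eq_reg_r (E * G - F ^ 2)); [rewrite Hdet; field|]; exact HD. }
  repeat split; [| | | exact Hinv]; apply (Rmult_eq_reg_r (E * G - F ^ 2)); try exact HD;
    unfold Rdiv; rewrite Rmult_assoc, Rinv_l by exact HD; rewrite <- Hdet; unfold dt.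
  - transitivity ((a2 * a2 * (a1 * a1 * E + (a1 * b1 + b1 * a1) * F + b1 * b1 * G)
      - 2 * a1 * a2 * (a1 * a2 * E + (a1 * b2 + b1 * a2) * F + b1 * b2 * G)
      + a1 * a1 * (a2 * a2 * E + (a2 * b2 + b2 * a2) * F + b2 * b2 * G)) * (E * G - F ^ 2));
      [rewrite H11, H22, H12; ring | ring].
  - transitivity (- (- (a2 * b2) * (a1 * a1 * E + (a1 * b1 + b1 * a1) * F + b1 * b1 * G)
      + (a1 * b2 + a2 * b1) * (a1 * a2 * E + (a1 * b2 + b1 * a2) * F + b1 * b2 * G)
      - a1 * b1 * (a2 * a2 * E + (a2 * b2 + b2 * a2) * F + b2 * b2 * G)) * (E * G - F ^ 2));
      [rewrite H11, H22, H12; ring | ring].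
  - transitivity ((b2 * b2 * (a1 * a1 * E + (a1 * b1 + b1 * a1) * F + b1 * b1 * G)
      - 2 * b1 * b2 * (a1 * a2 * E + (a1 * b2 + b1 * a2) * F + b1 * b2 * G)
      + b1 * b1 * (a2 * a2 * E + (a2 * b2 + b2 * a2) * F + b2 * b2 * G)) * (E * G - F ^ 2));
      [rewrite H11, H22, H12; ring | ring].
Qed.

Lemma orthonormal_frame_det (L M Nn : R) :
  form2 L M Nn e1 e1 * form2 L M Nn e2 e2 - form2 L M Nn e1 e2 * form2 L M Nn e2 e1
  = (L * Nn - M ^ 2) / (E * G - F ^ 2).
Proof.
  destruct orthonormal_frame_outer as (_ & _ & _ & Hdet).
  transitivity ((fst e1 * snd e2 - fst e2 * snd e1) ^ 2 * (L * Nn - M ^ 2));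
    [unfold form2; ring | rewrite Hdet; field; exact HD].
Qed.

Lemma orthonormal_frame_trace (L M Nn : R) :
  form2 L M Nn e1 e1 + form2 L M Nn e2 e2 = (G * L - 2 * F * M + E * Nn) / (E * G - F ^ 2).
Proof.
  destruct orthonormal_frame_outer as (Haa & Hab & Hbb & _).
  transitivity ((fst e1 * fst e1 + fst e2 * fst e2) * L
    + 2 * (fst e1 * snd e1 + fst e2 * snd e2) * M + (snd e1 * snd e1 + snd e2 * snd e2) * Nn);
    [unfold form2; ring | rewrite Haa, Hab, Hbb; field; exact HD].
Qed.

End OrthonormalFrame.

Lemma gaussK_eq (phi N : Pt2 -> Vec3) (q : Pt2) :
  fE phi q * fG phi q - fF phi q ^ 2 <> 0 ->
  gaussK phi N q
  = (hL phi N q * hN phi N q - hM phi N q ^ 2) / (fE phi q * fG phi q - fF phi q ^ 2).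
Proof. intros HD; unfold gaussK, shape11, shape12, shape21, shape22; field; exact HD. Qed.

Lemma meanH_eq (phi N : Pt2 -> Vec3) (q : Pt2) :
  fE phi q * fG phi q - fF phi q ^ 2 <> 0 ->
  meanH phi N q = / 2 * ((fG phi q * hL phi N q - 2 * fF phi q * hM phi N q + fE phi q * hN phi N q)
                         / (fE phi q * fG phi q - fF phi q ^ 2)).
Proof. intros HD; unfold meanH, shape11, shape22; field; exact HD. Qed.

Theorem mainTheorem2
  (C : Vec3 -> Vec3) (phi : Pt2 -> Vec3) (N : Pt2 -> Vec3)
  (E1 E2 : Pt2 -> Pt2) (F1 F2 : Vec3 -> Vec3) (q : Pt2) :
  smooth_field3 C ->
  smooth_map23 phi -> immersion phi ->
  unit_normal phi N ->
  smooth_map22 E1 -> smooth_map22 E2 ->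
  vdot (realize phi E1 q) (realize phi E1 q) = 1 ->
  vdot (realize phi E2 q) (realize phi E2 q) = 1 ->
  vdot (realize phi E1 q) (realize phi E2 q) = 0 ->
  smooth_field3 F1 -> smooth_field3 F2 ->
  F1 (phi q) = realize phi E1 q -> F2 (phi q) = realize phi E2 q ->
  secS C phi N E1 E2 q
  = secT C F1 F2 (phi q) + gaussK phi N q - vdot (C (phi q)) (N q) * meanH phi N q.
Proof.
  intros HC Hphi Him HN HE1 HE2 e11 e22 e12 HF1 HF2 F1q F2q.
  pose proof (immersion_gram_neq0 phi q Him) as HD.
  rewrite secT_omega, F1q, F2q by (rewrite ?F1q, ?F2q; assumption).
  unfold secS. rewrite !vdot_curvS by assumption.
  rewrite (vdot_sym (realize phi E2 q)), e11, e22, e12.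
  unfold omegaS. rewrite !sff_realize by assumption.
  rewrite !vdot_realize in e11, e22, e12.
  rewrite gaussK_eq, meanH_eq, <- orthonormal_frame_det with (e1 := E1 q) (e2 := E2 q),
    <- orthonormal_frame_trace with (e1 := E1 q) (e2 := E2 q) by assumption.
  field.
Qed.
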